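(* Let $m,n$ be nonnegative integers with $0\leqslant m\leqslant n$, let $\varepsilon\in\{+1,-1\}$, and let $z\in\mathbb{C}\setminus(-\infty,1]$. Then \begin{align*} \frac{\mathrm{d}^{m}}{\mathrm{d}z^{m}}\bigl[P_{n}(z)\ln(z+\varepsilon)\bigr] &= \frac{(2m)!}{2^{m}m!}C_{n-m}^{(m+1/2)}(z)\ln(z+\varepsilon)\\ &\quad -(-\varepsilon)^{n}(-1)^{m}(z+\varepsilon)^{-m}\sum_{k=0}^{m-1}\varepsilon^{k}\frac{(k+n)!\,(m-k-1)!}{k!\,(n-k)!}\left(\frac{z+\varepsilon}{2}\right)^{k}\\ &\quad +\frac{(-\varepsilon)^{n+m}}{2^{m}}\sum_{k=0}^{n-m}(-\varepsilon)^{k}\frac{(k+n+m)!}{k!\,(k+m)!\,(n-m-k)!}\,[\psi(k+m+1)-\psi(k+1)]\left(\frac{z+\varepsilon}{2}\right)^{k}. \end{align*}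
   Context: $P_n(z)$ denotes the Legendre polynomial of degree $n$. $C_{j}^{(\alpha)}(z)$ denotes the Gegenbauer (ultraspherical) polynomial of degree $j$ and parameter $\alpha$. $\psi(\zeta)=\Gamma'(\zeta)/\Gamma(\zeta)$ is the digamma function. The complex plane is cut along the real axis from $-\infty$ to $+1$; for $z\in\mathbb{C}\setminus(-\infty,1]$, $\ln(z\pm1)$ denotes the principal branch of the logarithm. The case $\varepsilon=+1$ concerns $\ln(z+1)$ and the case $\varepsilon=-1$ concerns $\ln(z-1)$. Empty sums are zero. *)

From Stdlib Require Import Reals ClassicalEpsilon Factorial.
From Coquelicot Require Import Coquelicot.
Open Scope R_scope.

Fixpoint Csum (f : nat -> C) (n : nat) : C :=
  match n with O => RtoC 0 | S n' => Cplus (Csum f n') (f n') end.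

Fixpoint poch (a : R) (r : nat) : R :=
  match r with O => 1 | S r' => poch a r' * (a + INR r') end.

Definition Legendre (n : nat) (z : C) : C :=
  Cmult (RtoC (/ 2 ^ n))
    (Csum (fun k => Cmult (RtoC ((-1) ^ k * Binomial.C n k * Binomial.C (2*n - 2*k) n))
                          (Cpow z (n - 2*k)))
          (S (Nat.div2 n))).

Definition Gegenbauer (j : nat) (a : R) (z : C) : C :=
  Csum (fun k => Cmult (RtoC ((-1) ^ k * poch a (j - k) / (INR (fact k) * INR (fact (j - 2*k)))))
                       (Cpow (Cmult (RtoC 2) z) (j - 2*k)))
       (S (Nat.div2 j)).

(* digamma function, Gauss' limit formula:
   psi(x) = lim_{N->oo} ( ln N - sum_{j=0}^{N} 1/(x+j) ) *)
Definition digamma (x : R) : R :=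
  real (Lim_seq (fun N => ln (INR N) - sum_f_R0 (fun j => / (x + INR j)) N)).

(* principal argument in (-pi, pi]; off the cut (-oo,0] it equals
   2 atan(Im z / (|z| + Re z)) *)
Definition Carg (z : C) : R :=
  if Rle_dec (Cmod z + Re z) 0 then PI else 2 * atan (Im z / (Cmod z + Re z)).

Definition Cln (z : C) : C := (ln (Cmod z), Carg z).

Definition CDerive (f : C -> C) (z : C) : C :=
  epsilon (inhabits (RtoC 0)) (fun l => @is_derive C_AbsRing C_NormedModule f z l).

Fixpoint CDerive_n (m : nat) (f : C -> C) : C -> C :=
  match m with O => f | S m' => CDerive (CDerive_n m' f) end.

(* Around [u = z + eps], Rodrigues' formula [2^n n! P_n = D^n (w^2 - 1)^n] together
   with [w^2 - 1 = u (u - 2 eps)] gives [P_n(z) = sum_k c_k u^k] with explicit [c_k];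
   comparing the same two expansions of [D^(n+m) (w^2 - 1)^n] identifies
   [sum_(k >= m) c_k D^m u^k] with [(2m)!/(2^m m!) C_(n-m)^(m+1/2)].  Differentiating
   [u^k ln u] [m] times gives [k!/(k-m)! u^(k-m) (ln u + H_k - H_(k-m))] for [k >= m]
   and [(-1)^(m-k-1) k! (m-k-1)! u^(k-m)] for [k < m]: the latter terms make up the
   middle sum, and [psi(j+1) = -gamma + H_j] turns the harmonic differences into the
   digamma differences of the last sum.  The principal logarithm is differentiated by
   hand, from [exp (Ln u) = u] and a quadratic bound on [e^d - 1 - d]. *)

From Stdlib Require Import Reals Factorial Lia Lra ClassicalEpsilon.
From Coquelicot Require Import Coquelicot.
Open Scope R_scope.

(* [ring]/[field] need the goal to be an equation in [C] itself, not in one of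
   the Coquelicot structures whose carrier is [C]. *)
Ltac C_ring := match goal with |- ?a = ?b => change (@eq C a b); cbv beta; ring end.
Ltac C_field := match goal with |- ?a = ?b => change (@eq C a b); cbv beta; field end.

(** * Finite sums *)

Lemma Csum_ext f g n : (forall k, (k < n)%nat -> f k = g k) -> Csum f n = Csum g n.
Proof.
  induction n as [|n IH]; intros H; simpl; auto.
  rewrite IH, H; auto with arith.
Qed.

Lemma Csum_zero f n : (forall k, (k < n)%nat -> f k = RtoC 0) -> Csum f n = RtoC 0.
Proof.
  induction n as [|n IH]; intros H; simpl; auto.
  rewrite IH, H; [C_ring|auto with arith..].
Qed.

Lemma Csum_plus f g n : Csum (fun k => Cplus (f k) (g k)) n = Cplus (Csum f n) (Csum g n).
Proof. induction n as [|n IH]; simpl; [C_ring|]. rewrite IH. C_ring. Qed.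

Lemma Csum_opp f n : Copp (Csum f n) = Csum (fun k => Copp (f k)) n.
Proof. induction n as [|n IH]; simpl; [C_ring|]. rewrite <- IH. C_ring. Qed.

Lemma Csum_mult_l c f n : Cmult c (Csum f n) = Csum (fun k => Cmult c (f k)) n.
Proof. induction n as [|n IH]; simpl; [C_ring|]. rewrite <- IH. C_ring. Qed.

Lemma Csum_mult_r c f n : Cmult (Csum f n) c = Csum (fun k => Cmult (f k) c) n.
Proof. induction n as [|n IH]; simpl; [C_ring|]. rewrite <- IH. C_ring. Qed.

Lemma Csum_add f a b : Csum f (a + b) = Cplus (Csum f a) (Csum (fun k => f (a + k)%nat) b).
Proof.
  induction b as [|b IH]; simpl; [rewrite Nat.add_0_r; C_ring|].
  rewrite Nat.add_succ_r. simpl. rewrite IH. C_ring.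
Qed.

Lemma Csum_S_l f n : Csum f (S n) = Cplus (f O) (Csum (fun k => f (S k)) n).
Proof.
  induction n as [|n IH]; [simpl; C_ring|].
  change (Csum f (S (S n))) with (Cplus (Csum f (S n)) (f (S n))).
  rewrite IH. simpl. C_ring.
Qed.

Lemma Csum_vanishing_tail f N1 N2 : (N1 <= N2)%nat ->
  (forall k, (N1 <= k < N2)%nat -> f k = RtoC 0) -> Csum f N2 = Csum f N1.
Proof.
  intros H Hz. replace N2 with (N1 + (N2 - N1))%nat by lia.
  rewrite Csum_add, (Csum_zero (fun k => f (N1 + k)%nat)); [C_ring|]. intros k Hk. apply Hz. lia.
Qed.

Definition binC (n k : nat) : R := if Nat.leb k n then Binomial.C n k else 0.

Lemma binC_eq n k : (k <= n)%nat -> binC n k = INR (fact n) / (INR (fact k) * INR (fact (n - k))).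
Proof. intros H. unfold binC. destruct (Nat.leb_spec k n); [reflexivity|lia]. Qed.

Lemma binC_n_0 n : binC n 0 = 1.
Proof. rewrite binC_eq, Nat.sub_0_r by lia. simpl. field. apply INR_fact_neq_0. Qed.

Lemma binC_gt n k : (n < k)%nat -> binC n k = 0.
Proof. intros H. unfold binC. destruct (Nat.leb_spec k n); [lia|reflexivity]. Qed.

Lemma binC_pascal n k : binC (S n) (S k) = binC n k + binC n (S k).
Proof.
  destruct (Nat.lt_trichotomy k n) as [H|[->|H]].
  - unfold binC. destruct (Nat.leb_spec (S k) (S n)), (Nat.leb_spec k n), (Nat.leb_spec (S k) n);
      try lia. symmetry. apply Binomial.pascal. lia.
  - rewrite (binC_gt n (S n)) by lia. rewrite !binC_eq, !Nat.sub_diag by lia.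
    pose proof (INR_fact_neq_0 n). pose proof (INR_fact_neq_0 (S n)).
    cbn [fact]. rewrite INR_1. field. auto.
  - rewrite !binC_gt by lia. ring.
Qed.

Lemma Cbinomial (a b : C) n :
  Cpow (Cplus a b) n = Csum (fun k => Cmult (RtoC (binC n k)) (Cmult (Cpow a k) (Cpow b (n - k)))) (S n).
Proof.
  set (T n k := Cmult (RtoC (binC n k)) (Cmult (Cpow a k) (Cpow b (n - k)))).
  change (Cpow (Cplus a b) n = Csum (T n) (S n)).
  induction n as [|n IH]; [unfold T; simpl; rewrite binC_n_0; C_ring|].
  assert (Ha : Cmult a (Csum (T n) (S n)) =
               Csum (fun k => Cmult (RtoC (binC n k)) (Cmult (Cpow a (S k)) (Cpow b (S n - S k)))) (S n)).
  { rewrite Csum_mult_l. apply Csum_ext. intros k _. unfold T. rewrite Nat.sub_succ, Cpow_S. C_ring. }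
  assert (Hb : Cmult b (Csum (T n) (S n)) = Cplus (Cpow b (S n))
                 (Csum (fun k => Cmult (RtoC (binC n (S k))) (Cmult (Cpow a (S k)) (Cpow b (S n - S k)))) (S n))).
  { rewrite Csum_S_l, Cmult_plus_distr_l, Csum_mult_l. cbn [Csum].
    rewrite binC_gt by lia. unfold T at 1. rewrite binC_n_0, Nat.sub_0_r.
    rewrite (Csum_ext (fun k => Cmult b (T n (S k)))
      (fun k => Cmult (RtoC (binC n (S k))) (Cmult (Cpow a (S k)) (Cpow b (S n - S k))))).
    2:{ intros k Hk. unfold T. replace (S n - S k)%nat with (S (n - S k)) by lia. rewrite (Cpow_S b). C_ring. }
    rewrite Cpow_S. simpl Cpow. C_ring. }
  rewrite Cpow_S, IH, Cmult_plus_distr_r, Ha, Hb, (Csum_S_l _ (S n)).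
  rewrite Cplus_assoc, (Cplus_comm (Csum _ _) (Cpow b _)), <- Cplus_assoc, <- Csum_plus.
  apply f_equal2.
  - unfold T. rewrite binC_n_0, Nat.sub_0_r. simpl Cpow. C_ring.
  - apply Csum_ext. intros k _. unfold T. rewrite binC_pascal, RtoC_plus, Nat.sub_succ. C_ring.
Qed.

(** * Complex derivatives *)

Notation is_Cderive f z l := (@is_derive C_AbsRing C_NormedModule f z l).

(* Neighbourhoods for the modulus; by [locally_C] they are also those of the
   product topology [C_UniformSpace]. *)
Notation Cnear z := (@locally (AbsRing_UniformSpace C_AbsRing) z).

Lemma Cnear_ball z d : 0 < d -> Cnear z (fun w => Cmod (Cminus w z) < d).
Proof. intros Hd. exists (mkposreal d Hd). intros w Hw. exact Hw. Qed.

Lemma is_Cderive_AbsRing f z l :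
  is_Cderive f z l <-> @is_derive C_AbsRing (AbsRing_NormedModule C_AbsRing) f z l.
Proof.
  split; intros [[a b [M [HM HlM]]] Hd]; split; try exact Hd;
    constructor; auto; exists M; split; auto.
Qed.

Lemma is_Cderive_eq f z l l' : is_Cderive f z l -> l = l' -> is_Cderive f z l'.
Proof. intros H <-. exact H. Qed.

Lemma is_Cderive_const (c z : C) : is_Cderive (fun _ => c) z (RtoC 0).
Proof. exact (is_derive_const c z). Qed.

Lemma is_Cderive_id z : is_Cderive (fun w => w) z (RtoC 1).
Proof. apply is_Cderive_AbsRing. exact (is_derive_id z). Qed.

Lemma is_Cderive_plus f g z a b :
  is_Cderive f z a -> is_Cderive g z b -> is_Cderive (fun w => Cplus (f w) (g w)) z (Cplus a b).
Proof. intros Ha Hb. exact (is_derive_plus f g z a b Ha Hb). Qed.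

Lemma is_Cderive_mult f g z a b : is_Cderive f z a -> is_Cderive g z b ->
  is_Cderive (fun w => Cmult (f w) (g w)) z (Cplus (Cmult a (g z)) (Cmult (f z) b)).
Proof.
  intros Ha Hb. apply is_Cderive_AbsRing.
  exact (is_derive_mult f g z a b (proj1 (is_Cderive_AbsRing _ _ _) Ha) (proj1 (is_Cderive_AbsRing _ _ _) Hb) Cmult_comm).
Qed.

Lemma is_Cderive_comp f g z a b : is_Cderive f (g z) a -> is_Cderive g z b ->
  is_Cderive (fun w => f (g w)) z (Cmult b a).
Proof. intros Ha Hb. exact (is_derive_comp f g z a b Ha (proj1 (is_Cderive_AbsRing _ _ _) Hb)). Qed.

Lemma is_Cderive_scal c f z a : is_Cderive f z a -> is_Cderive (fun w => Cmult c (f w)) z (Cmult c a).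
Proof.
  intros H. eapply is_Cderive_eq; [apply is_Cderive_mult; [apply is_Cderive_const|exact H]|].
  C_ring.
Qed.

Lemma is_Cderive_Csum (F dF : nat -> C -> C) n z :
  (forall k, (k < n)%nat -> is_Cderive (F k) z (dF k z)) ->
  is_Cderive (fun w => Csum (fun k => F k w) n) z (Csum (fun k => dF k z) n).
Proof.
  induction n as [|n IH]; intros H; simpl; [apply is_Cderive_const|].
  apply is_Cderive_plus; [apply IH; auto|apply H; lia].
Qed.

Lemma is_Cderive_shift s z : is_Cderive (fun w => Cplus w s) z (RtoC 1).
Proof.
  eapply is_Cderive_eq; [apply is_Cderive_plus; [apply is_Cderive_id|apply is_Cderive_const]|].
  C_ring.
Qed.

Lemma is_Cderive_pow_shift s k z :
  is_Cderive (fun w => Cpow (Cplus w s) k) z (Cmult (RtoC (INR k)) (Cpow (Cplus z s) (pred k))).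
Proof.
  induction k as [|k IH]; [eapply is_Cderive_eq; [apply (is_Cderive_const (RtoC 1))|simpl; C_ring]|].
  eapply is_Cderive_eq.
  - apply (is_Cderive_mult (fun w => Cplus w s) (fun w => Cpow (Cplus w s) k));
      [apply is_Cderive_shift|exact IH].
  - destruct k as [|k]; [simpl; C_ring|].
    rewrite (S_INR (S k)), RtoC_plus. simpl pred. rewrite (Cpow_S _ k). C_ring.
Qed.

Lemma is_Cderive_intro f z l :
  (forall eps : posreal, Cnear z (fun w =>
     Cmod (Cminus (Cminus (f w) (f z)) (Cmult (Cminus w z) l)) <= eps * Cmod (Cminus w z))) ->
  is_Cderive f z l.
Proof.
  intros H. apply is_Cderive_AbsRing. split; [apply is_linear_scal_l|].
  intros z' Hz'. apply (@is_filter_lim_locally_unique C_AbsRing (AbsRing_NormedModule C_AbsRing)) in Hz'.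
  subst z'. exact H.
Qed.

Lemma Cmod_sub_le a b : Cmod a - Cmod (Cminus b a) <= Cmod b.
Proof.
  assert (Cmod a <= Cmod b + Cmod (Cminus a b)).
  { replace a with (Cplus b (Cminus a b)) at 1 by C_ring. apply Cmod_triangle. }
  rewrite <- (Cmod_opp (Cminus a b)) in H. replace (Copp (Cminus a b)) with (Cminus b a) in H by C_ring. lra.
Qed.

Lemma is_Cderive_inv z : z <> RtoC 0 -> is_Cderive Cinv z (Copp (Cinv (Cmult z z))).
Proof.
  intros Hz. apply is_Cderive_intro. intros eps.
  pose proof (proj1 (Cmod_gt_0 z) Hz) as Hr. set (r := Cmod z) in *.
  assert (Hd : 0 < Rmin (r / 2) (eps * r ^ 3 / 2)).
  { apply Rmin_glb_lt; [lra|].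
    apply Rdiv_lt_0_compat; [apply Rmult_lt_0_compat; [apply cond_pos|apply pow_lt, Hr]|lra]. }
  apply (filter_imp (fun w => Cmod (Cminus w z) < Rmin (r / 2) (eps * r ^ 3 / 2))); [|apply Cnear_ball, Hd].
  intros w Hw.
  assert (Hw1 : Cmod (Cminus w z) < r / 2) by (eapply Rlt_le_trans; [exact Hw|apply Rmin_l]).
  assert (Hw2 : Cmod (Cminus w z) < eps * r ^ 3 / 2) by (eapply Rlt_le_trans; [exact Hw|apply Rmin_r]).
  assert (Hwr : r / 2 <= Cmod w) by (pose proof (Cmod_sub_le z w); unfold r in *; lra).
  assert (Hw0 : w <> RtoC 0) by (intros E; rewrite E, Cmod_0 in Hwr; lra).
  replace (Cminus (Cminus (Cinv w) (Cinv z)) (Cmult (Cminus w z) (Copp (Cinv (Cmult z z)))))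
    with (Cmult (Cmult (Cminus w z) (Cminus w z)) (Cinv (Cmult (Cmult z z) w)))
    by (C_field; auto).
  rewrite !Cmod_mult, Cmod_inv, !Cmod_mult by (repeat apply Cmult_neq_0; auto). fold r.
  set (t := Cmod (Cminus w z)) in *. assert (0 <= t) by apply Cmod_ge_0.
  apply Rle_trans with (t * t * (2 / r ^ 3)).
  - apply Rmult_le_compat_l; [nra|].
    replace (2 / r ^ 3) with (/ (r * r * (r / 2))) by (field; lra).
    apply Rinv_le_contravar; [apply Rmult_lt_0_compat; [nra|lra]|]. apply Rmult_le_compat_l; nra.
  - pose proof (pow_lt r 3 Hr). apply Rle_trans with (t * (eps * r ^ 3 / 2) * (2 / r ^ 3)).
    + apply Rmult_le_compat_r; [apply Rlt_le, Rdiv_lt_0_compat; lra|]. nra.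
    + right. field. lra.
Qed.

Lemma CDerive_eq f z l : is_Cderive f z l -> CDerive f z = l.
Proof.
  intros H. unfold CDerive.
  assert (Hex : exists l', is_Cderive f z l') by (exists l; exact H).
  rewrite <- (is_C_derive_unique f z l H).
  symmetry. apply is_C_derive_unique, (epsilon_spec (inhabits (RtoC 0)) _ Hex).
Qed.

Lemma CDerive_n_on_open (U : C -> Prop) (f : C -> C) (g : nat -> C -> C) :
  (forall w, U w -> Cnear w U) -> (forall w, U w -> f w = g O w) ->
  (forall k w, U w -> is_Cderive (g k) w (g (S k) w)) ->
  forall m w, U w -> CDerive_n m f w = g m w.
Proof.
  intros HU Hf Hg m. induction m as [|m IH]; intros w Hw; [exact (Hf w Hw)|].
  apply CDerive_eq, (is_derive_ext_loc (g m)); [|exact (Hg m w Hw)].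
  apply (filter_imp U); [|exact (HU w Hw)]. intros t Ht. symmetry. exact (IH t Ht).
Qed.

(** * The principal logarithm *)

Definition Cexp (d : C) : C := (exp (Re d) * cos (Im d), exp (Re d) * sin (Im d)).

Lemma Cexp_plus a b : Cexp (Cplus a b) = Cmult (Cexp a) (Cexp b).
Proof.
  destruct a as [a1 a2], b as [b1 b2]. unfold Cexp, Cplus, Cmult, Re, Im; simpl.
  rewrite exp_plus, cos_plus, sin_plus. f_equal; ring.
Qed.

(* [0 < Cmod w + Re w] says that [w] lies off the cut [(-oo, 0]]. *)
Lemma Cmod_pos_off_cut w : 0 < Cmod w + Re w -> 0 < Cmod w.
Proof.
  intros H. destruct (Req_dec (Cmod w) 0) as [E|E]; [|pose proof (Cmod_ge_0 w); lra].
  apply Cmod_eq_0 in E. rewrite E in H. rewrite Cmod_0 in H. simpl in H. lra.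
Qed.

Lemma nonzero_off_cut u : 0 < Cmod u + Re u -> u <> RtoC 0.
Proof. intros H E. apply Cmod_pos_off_cut in H. rewrite E, Cmod_0 in H. lra. Qed.

Lemma Carg_off_cut w : 0 < Cmod w + Re w -> Carg w = 2 * atan (Im w / (Cmod w + Re w)).
Proof. intros H. unfold Carg. destruct (Rle_dec (Cmod w + Re w) 0); [lra|reflexivity]. Qed.

Lemma Cexp_Cln w : 0 < Cmod w + Re w -> Cexp (Cln w) = w.
Proof.
  intros H. pose proof (Cmod_pos_off_cut w H) as Hr.
  unfold Cexp, Cln, Re, Im; simpl. rewrite Carg_off_cut, exp_ln by exact H || exact Hr.
  rewrite cos_2a, sin_2a, cos_atan, sin_atan.
  set (t := Im w / (Cmod w + Re w)).
  assert (Hs : sqrt (1 + t²) * sqrt (1 + t²) = 1 + t²) by (apply sqrt_sqrt; unfold Rsqr; nra).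
  assert (Hs0 : 0 < sqrt (1 + t²)) by (apply sqrt_lt_R0; unfold Rsqr; nra).
  set (s := sqrt (1 + t²)) in *. unfold Rsqr in *.
  destruct w as [a b]. unfold Re, Im in *; simpl in *.
  assert (Hm : Cmod (a, b) * Cmod (a, b) = a * a + b * b).
  { unfold Cmod; simpl. rewrite sqrt_sqrt; nra. }
  set (r := Cmod (a, b)) in *.
  (* the half-angle formulas, with [t = tan (arg w / 2)] *)
  assert (T1 : t * (r + a) = b) by (unfold t; field; lra).
  assert (T2 : (r + a) * (t * t) = r - a).
  { apply Rmult_eq_reg_l with (r + a); [|lra].
    transitivity ((t * (r + a)) * (t * (r + a))); [ring|]. rewrite T1. nra. }
  assert (E1 : r * (1 - t * t) = a * (1 + t * t)).
  { transitivity (a * (1 + t * t) + ((r - a) - (r + a) * (t * t))); [ring|]. rewrite T2. ring. }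
  assert (E2 : 2 * r * t = b * (1 + t * t)).
  { rewrite <- T1. transitivity (t * (r + a) * (1 + t * t) + t * ((r - a) - (r + a) * (t * t))); [ring|].
    rewrite T2. ring. }
  f_equal.
  - replace (r * (1 / s * (1 / s) - t / s * (t / s))) with (r * (1 - t * t) / (s * s)) by (field; lra).
    rewrite Hs, E1. field. nra.
  - replace (r * (2 * (t / s) * (1 / s))) with (2 * r * t / (s * s)) by (field; lra).
    rewrite Hs, E2. field. nra.
Qed.

Lemma exp_le_inv_1_sub a : a < 1 -> exp a <= / (1 - a).
Proof.
  intros H. pose proof (exp_ineq1_le (- a)). rewrite <- (Rinv_inv (exp a)), <- exp_Ropp.
  apply Rinv_le_contravar; lra.
Qed.

Lemma exp_sub_1_sub_bound a : Rabs a <= 1 / 2 -> 0 <= exp a - 1 - a <= 2 * (a * a).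
Proof.
  intros H. apply Rabs_le_between in H. pose proof (exp_ineq1_le a).
  pose proof (exp_le_inv_1_sub a ltac:(lra)).
  assert (/ (1 - a) - 1 - a = a * a / (1 - a)) by (field; lra).
  assert (a * a / (1 - a) <= a * a * 2).
  { apply Rmult_le_compat_l; [nra|]. replace 2 with (/ (1 / 2)) by field. apply Rinv_le_contravar; lra. }
  lra.
Qed.

Lemma Rabs_sin_le b : Rabs (sin b) <= Rabs b.
Proof.
  assert (Hpos : forall b, 0 <= b -> Rabs (sin b) <= b).
  { clear b. intros b Hb. pose proof (SIN_bound b). pose proof PI2_1.
    destruct (Req_dec b 0) as [->|Hb0]; [rewrite sin_0, Rabs_R0; lra|].
    pose proof (sin_lt_x b ltac:(lra)).
    destruct (Rle_lt_dec 1 b); [apply Rabs_le; lra|].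
    rewrite Rabs_right; [lra|]. apply Rle_ge, sin_ge_0; lra. }
  destruct (Rle_lt_dec 0 b) as [Hb|Hb].
  - rewrite (Rabs_right b) by lra. apply Hpos, Hb.
  - rewrite <- Rabs_Ropp, <- sin_neg, (Rabs_left b) by lra. apply Hpos. lra.
Qed.

Lemma sin_sub_id_bound b : Rabs b <= 1 / 2 -> Rabs (sin b - b) <= b * b.
Proof.
  assert (Hpos : forall b, 0 <= b <= 1 / 2 -> Rabs (sin b - b) <= b * b).
  { clear b. intros b Hb. pose proof PI2_1.
    destruct (sin_bound b 0 ltac:(lra) ltac:(lra)) as [Hlow _].
    (* [sin_approx b 1 = b - b^3/6] *)
    unfold sin_approx in Hlow. simpl in Hlow. unfold sin_term in Hlow. simpl in Hlow.
    field_simplify in Hlow.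
    assert (sin b <= b).
    { destruct (Req_dec b 0) as [->|]; [rewrite sin_0; lra|apply Rlt_le, sin_lt_x; lra]. }
    rewrite Rabs_left1 by lra. nra. }
  intros Hb. destruct (Rle_lt_dec 0 b) as [Hb0|Hb0].
  - apply Hpos. apply Rabs_le_between in Hb. lra.
  - replace (sin b - b) with (- (sin (- b) - (- b))) by (rewrite sin_neg; ring).
    rewrite Rabs_Ropp. replace (b * b) with (- b * - b) by ring. apply Hpos.
    apply Rabs_le_between in Hb. lra.
Qed.

Lemma cos_bound b : 0 <= 1 - cos b <= b * b / 2.
Proof.
  replace (cos b) with (1 - 2 * (sin (b / 2) * sin (b / 2))).
  2:{ rewrite <- Rmult_assoc, <- cos_2a_sin. f_equal. field. }
  pose proof (Rabs_sin_le (b / 2)) as H. apply Rsqr_le_abs_1 in H. unfold Rsqr in H.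
  assert (0 <= sin (b / 2) * sin (b / 2)) by nra. lra.
Qed.

Lemma Rabs_Im_le_Cmod w : Rabs (Im w) <= Cmod w.
Proof. eapply Rle_trans; [apply Rmax_r|apply Rmax_Cmod]. Qed.

Lemma Cmod_le_Rabs_Re_Im w : Cmod w <= Rabs (Re w) + Rabs (Im w).
Proof.
  destruct w as [a b]. unfold Re, Im; simpl.
  replace (a, b) with (Cplus (RtoC a) (Cmult (RtoC b) Ci)) by (unfold RtoC, Ci, Cplus, Cmult; simpl; f_equal; ring).
  eapply Rle_trans; [apply Cmod_triangle|].
  rewrite Cmod_mult, !Cmod_R, Cmod_Ci. lra.
Qed.

Lemma Cexp_sub_linear_bound d : Cmod d <= 1 / 2 ->
  Cmod (Cminus (Cminus (Cexp d) (RtoC 1)) d) <= 6 * (Cmod d * Cmod d).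
Proof.
  intros Hd. set (r := Cmod d) in *.
  pose proof (re_le_Cmod d) as Ha. pose proof (Rabs_Im_le_Cmod d) as Hb. fold r in Ha, Hb.
  eapply Rle_trans; [apply Cmod_le_Rabs_Re_Im|].
  destruct d as [a b]. unfold Cexp, Re, Im in *; simpl in *.
  pose proof (Rsqr_le_abs_1 a r) as Har. pose proof (Rsqr_le_abs_1 b r) as Hbr. unfold Rsqr in Har, Hbr.
  rewrite (Rabs_right r) in Har, Hbr by (pose proof (Rabs_pos a); lra).
  specialize (Har Ha). specialize (Hbr Hb).
  destruct (exp_sub_1_sub_bound a ltac:(lra)) as [E1 E2].
  pose proof (cos_bound b) as Cb. pose proof (sin_sub_id_bound b ltac:(lra)) as Sb.
  pose proof (Rabs_sin_le b) as Sb'.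
  assert (He : exp a <= 2) by (apply Rabs_le_between in Ha; nra).
  pose proof (exp_pos a).
  assert (R1 : Rabs (exp a * cos b + - (1) + - a) <= 3 * (r * r)).
  { replace (exp a * cos b + - (1) + - a) with ((exp a - 1 - a) - exp a * (1 - cos b)) by ring.
    assert (0 <= exp a * (1 - cos b) <= b * b) by (split; nra).
    apply Rabs_le. nra. }
  assert (R2 : Rabs (exp a * sin b + - 0 + - b) <= 3 * (r * r)).
  { replace (exp a * sin b + - 0 + - b) with ((exp a - 1) * sin b + (sin b - b)) by ring.
    eapply Rle_trans; [apply Rabs_triang|]. rewrite Rabs_mult.
    assert (Rabs (exp a - 1) <= 2 * r).
    { apply Rabs_le. apply Rabs_le_between in Ha. nra. }
    assert (Rabs (exp a - 1) * Rabs (sin b) <= 2 * r * r).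
    { apply Rmult_le_compat; auto using Rabs_pos. lra. }
    lra. }
  lra.
Qed.

Lemma continuous_Cmod_plus_Re w : continuous (fun y : C => Cmod y + Re y) w.
Proof.
  apply (@continuous_plus C_UniformSpace R_AbsRing R_NormedModule Cmod Re).
  - exact (filterlim_norm w).
  - destruct w as [a b]. apply continuous_fst.
Qed.

Lemma locally_off_cut w : 0 < Cmod w + Re w -> locally w (fun y => 0 < Cmod y + Re y).
Proof. intros Hw. apply (continuous_Cmod_plus_Re w), (open_gt 0), Hw. Qed.

Lemma continuous_Carg w : 0 < Cmod w + Re w -> continuous Carg w.
Proof.
  intros Hw. apply (continuous_ext_loc _ (fun y => 2 * atan (Im y / (Cmod y + Re y)))).
  - apply (filter_imp _ _ (fun y Hy => eq_sym (Carg_off_cut y Hy))), locally_off_cut, Hw.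
  - apply (@continuous_mult C_UniformSpace R_AbsRing (fun _ => 2)); [apply continuous_const|].
    apply (continuous_comp _ atan); [|apply continuous_atan].
    apply (@continuous_mult C_UniformSpace R_AbsRing).
    + destruct w as [a b]. apply continuous_snd.
    + apply (continuous_comp _ Rinv); [apply continuous_Cmod_plus_Re|apply continuous_Rinv; lra].
Qed.

Lemma continuous_Cln w : 0 < Cmod w + Re w -> continuous Cln w.
Proof.
  intros Hw. apply (continuous_comp_2 (fun y => ln (Cmod y)) Carg pair).
  - apply (continuous_comp Cmod ln); [exact (filterlim_norm w)|].
    apply continuous_ln, Cmod_pos_off_cut, Hw.
  - apply continuous_Carg, Hw.
  - apply (continuous_ext (fun p => p)); [intros [a b]; reflexivity|apply continuous_id].
Qed.

Lemma is_Cderive_Cln w : 0 < Cmod w + Re w -> is_Cderive Cln w (Cinv w).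
Proof.
  intros Hw. apply is_Cderive_intro. intros eps.
  pose proof (Cmod_pos_off_cut w Hw) as Hr. set (r := Cmod w) in *.
  pose proof (nonzero_off_cut w Hw) as Hw0.
  set (rho := Rmin (1 / 12) (eps * r / 12)).
  assert (Hrho : 0 < rho).
  { apply Rmin_glb_lt; [lra|]. pose proof (cond_pos eps). apply Rdiv_lt_0_compat; [nra|lra]. }
  assert (Hnear : Cnear w (fun y => Cmod (Cminus (Cln y) (Cln w)) < rho /\ 0 < Cmod y + Re y)).
  { apply filter_and; apply locally_C.
    - apply (continuous_Cln w Hw (fun v => Cmod (Cminus v (Cln w)) < rho)).
      apply locally_C, Cnear_ball, Hrho.
    - apply locally_off_cut, Hw. }
  refine (filter_imp _ _ _ Hnear). intros y [Hd Hy].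
  set (d := Cminus (Cln y) (Cln w)) in *. set (p := Cmod d) in *.
  assert (Hp : 0 <= p <= 1 / 12 /\ p <= eps * r / 12).
  { assert (0 <= p) by apply Cmod_ge_0. assert (rho <= 1 / 12) by apply Rmin_l.
    assert (rho <= eps * r / 12) by apply Rmin_r. lra. }
  (* y = w e^d, so the remainder is w times that of the exponential *)
  assert (Ey : y = Cmult w (Cexp d)).
  { rewrite <- (Cexp_Cln w Hw) at 1. rewrite <- Cexp_plus, <- (Cexp_Cln y Hy) at 1.
    f_equal. unfold d. C_ring. }
  pose proof (Cexp_sub_linear_bound d ltac:(fold p; lra)) as B.
  set (E := Cexp d) in *.
  replace (Cminus y w) with (Cmult w (Cminus E (RtoC 1))) by (rewrite Ey; C_ring).
  replace (Cminus d (Cmult (Cmult w (Cminus E (RtoC 1))) (Cinv w)))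
    with (Copp (Cminus (Cminus E (RtoC 1)) d)) by (C_field; exact Hw0).
  rewrite Cmod_opp, Cmod_mult. fold r p in B |- *.
  pose proof (Cmod_sub_le d (Cminus E (RtoC 1))) as L. fold p in L.
  assert (6 * (p * p) <= eps * r * (p / 2)) by nra.
  assert (eps * r * (p / 2) <= eps * (r * Cmod (Cminus E (RtoC 1)))).
  { rewrite Rmult_assoc. pose proof (cond_pos eps).
    apply Rmult_le_compat_l; [lra|]. apply Rmult_le_compat_l; nra. }
  lra.
Qed.

Lemma off_cut_of_not_nonpos u : ~ (Im u = 0 /\ Re u <= 0) -> 0 < Cmod u + Re u.
Proof.
  intros Hu. pose proof (re_le_Cmod u) as Hre.
  destruct (Req_dec (Im u) 0) as [E|E].
  - assert (0 < Re u) by (apply Rnot_le_lt; intros H; apply Hu; auto).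
    rewrite Rabs_right in Hre; lra.
  - assert (Rabs (Re u) < Cmod u); [|apply Rabs_def2 in H; lra].
    destruct u as [a b]. unfold Cmod, Re, Im in *; simpl in *.
    rewrite <- sqrt_Rsqr_abs. apply sqrt_lt_1_alt. unfold Rsqr.
    split; [nra|]. assert (0 < b * b) by (apply Rsqr_pos_lt in E; exact E). lra.
Qed.

Lemma Cnear_off_cut_shift s w : 0 < Cmod (Cplus w s) + Re (Cplus w s) ->
  Cnear w (fun y => 0 < Cmod (Cplus y s) + Re (Cplus y s)).
Proof.
  intros Hw. apply locally_C.
  apply (continuous_comp (fun y => Cplus y s) (fun u => Cmod u + Re u)).
  - apply (@continuous_plus C_UniformSpace C_AbsRing C_NormedModule (fun y => y) (fun _ => s)).
    + apply continuous_id.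
    + apply continuous_const.
  - apply continuous_Cmod_plus_Re.
  - apply (open_gt 0), Hw.
Qed.

(** * Derivatives of [u^k ln u] *)

Fixpoint ffact (e r : nat) : nat :=
  match r with O => 1%nat | S r' => (ffact e r' * (e - r'))%nat end.

Lemma ffact_fact e r : (r <= e)%nat -> (ffact e r * fact (e - r) = fact e)%nat.
Proof.
  induction r as [|r IH]; intros H; simpl; [rewrite Nat.sub_0_r; lia|].
  rewrite <- IH by lia. replace (e - r)%nat with (S (e - S r)) by lia. simpl. lia.
Qed.

Lemma ffact_INR e r : (r <= e)%nat -> INR (ffact e r) = INR (fact e) / INR (fact (e - r)).
Proof.
  intros H. rewrite <- (ffact_fact e r H), mult_INR. field. apply INR_fact_neq_0.
Qed.

Lemma ffact_diag k : ffact k k = fact k.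
Proof. pose proof (ffact_fact k k (le_n k)). rewrite Nat.sub_diag in H. simpl in H. lia. Qed.

Lemma ffact_gt e r : (e < r)%nat -> ffact e r = O.
Proof.
  induction r as [|r IH]; intros H; [lia|]. simpl.
  destruct (Nat.eq_dec r e) as [->|]; [rewrite Nat.sub_diag; lia|]. rewrite IH by lia. lia.
Qed.

Fixpoint harmonic (k : nat) : R :=
  match k with O => 0 | S k' => harmonic k' + / INR (S k') end.

(* The [m]-th derivative of [u^k ln u], [u = w + s]: once [m] exceeds [k] the
   logarithm has been differentiated away. *)
Definition log_monomial_deriv (s : C) (k m : nat) (w : C) : C :=
  if Nat.leb m k then
    Cmult (RtoC (INR (ffact k m)))
      (Cmult (Cpow (Cplus w s) (k - m)) (Cplus (Cln (Cplus w s)) (RtoC (harmonic k - harmonic (k - m)))))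
  else Cmult (RtoC ((-1) ^ (m - k - 1) * INR (fact k) * INR (fact (m - k - 1))))
         (Cinv (Cpow (Cplus w s) (m - k))).

Lemma log_monomial_deriv_0 s k w :
  log_monomial_deriv s k 0 w = Cmult (Cpow (Cplus w s) k) (Cln (Cplus w s)).
Proof.
  unfold log_monomial_deriv. simpl Nat.leb. cbv iota. rewrite Nat.sub_0_r, Rminus_diag. simpl ffact.
  rewrite INR_1. C_ring.
Qed.

Lemma is_Cderive_Cln_shift s w : 0 < Cmod (Cplus w s) + Re (Cplus w s) ->
  is_Cderive (fun y => Cln (Cplus y s)) w (Cinv (Cplus w s)).
Proof.
  intros H. eapply is_Cderive_eq.
  - apply (is_Cderive_comp Cln (fun y => Cplus y s)); [apply is_Cderive_Cln, H|apply is_Cderive_shift].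
  - C_ring.
Qed.

Lemma is_Cderive_pow_log_shift s e h w : 0 < Cmod (Cplus w s) + Re (Cplus w s) ->
  is_Cderive (fun y => Cmult (Cpow (Cplus y s) e) (Cplus (Cln (Cplus y s)) (RtoC h))) w
    (Cplus (Cmult (Cmult (RtoC (INR e)) (Cpow (Cplus w s) (pred e))) (Cplus (Cln (Cplus w s)) (RtoC h)))
           (Cmult (Cpow (Cplus w s) e) (Cinv (Cplus w s)))).
Proof.
  intros H.
  apply (is_Cderive_mult (fun y => Cpow (Cplus y s) e) (fun y => Cplus (Cln (Cplus y s)) (RtoC h)));
    [apply is_Cderive_pow_shift|].
  eapply is_Cderive_eq.
  - apply is_Cderive_plus; [apply is_Cderive_Cln_shift, H|apply is_Cderive_const].
  - C_ring.
Qed.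

Lemma is_Cderive_inv_pow_shift s j w : Cplus w s <> RtoC 0 ->
  is_Cderive (fun y => Cinv (Cpow (Cplus y s) j)) w
    (Cmult (Cmult (RtoC (INR j)) (Cpow (Cplus w s) (pred j)))
       (Copp (Cinv (Cmult (Cpow (Cplus w s) j) (Cpow (Cplus w s) j))))).
Proof.
  intros H. apply (is_Cderive_comp Cinv (fun y => Cpow (Cplus y s) j)).
  - apply is_Cderive_inv, Cpow_nz, H.
  - apply is_Cderive_pow_shift.
Qed.

Lemma RtoC_INR_neq_0 n : n <> O -> RtoC (INR n) <> RtoC 0.
Proof. intros Hn E. apply RtoC_inj in E. exact (not_0_INR n Hn E). Qed.

Lemma is_Cderive_log_monomial_deriv s k m w : 0 < Cmod (Cplus w s) + Re (Cplus w s) ->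
  is_Cderive (log_monomial_deriv s k m) w (log_monomial_deriv s k (S m) w).
Proof.
  intros Hw. pose proof (nonzero_off_cut _ Hw) as Hu. unfold log_monomial_deriv.
  destruct (Nat.leb_spec m k) as [Hmk|Hmk], (Nat.leb_spec (S m) k) as [Hmk'|Hmk']; try lia.
  - eapply is_Cderive_eq; [apply is_Cderive_scal, is_Cderive_pow_log_shift, Hw|].
    set (u := Cplus w s) in *. destruct (Nat.le_exists_sub (S m) k Hmk') as [j [-> _]].
    simpl ffact. replace (j + S m - m)%nat with (S j) by lia. replace (j + S m - S m)%nat with j by lia.
    simpl pred. rewrite mult_INR, RtoC_mult.
    replace (harmonic (j + S m) - harmonic (S j))
      with (harmonic (j + S m) - harmonic j - / INR (S j)) by (simpl; ring).
    rewrite (RtoC_minus _ (/ INR (S j))), Cpow_S, RtoC_inv by (apply not_0_INR; lia).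
    pose proof (RtoC_INR_neq_0 (S j) ltac:(lia)). C_field. split; auto.
  - assert (k = m) by lia. subst k. rewrite Nat.sub_diag.
    replace (S m - m - 1)%nat with O by lia. replace (S m - m)%nat with 1%nat by lia.
    eapply is_Cderive_eq; [apply is_Cderive_scal, is_Cderive_pow_log_shift, Hw|].
    rewrite ffact_diag. simpl Cpow. simpl pow. rewrite !RtoC_mult. simpl fact. rewrite INR_0, INR_1. C_field. exact Hu.
  - destruct (Nat.le_exists_sub (S k) m Hmk) as [j [-> _]].
    replace (j + S k - k - 1)%nat with j by lia. replace (j + S k - k)%nat with (S j) by lia.
    replace (S (j + S k) - k - 1)%nat with (S j) by lia. replace (S (j + S k) - k)%nat with (S (S j)) by lia.
    eapply is_Cderive_eq; [apply is_Cderive_scal, is_Cderive_inv_pow_shift, Hu|].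
    set (u := Cplus w s) in *. simpl pred.
    rewrite fact_simpl, !mult_INR, !RtoC_mult, !RtoC_pow.
    pose proof (Cpow_nz u j Hu).
    rewrite !Cpow_S. simpl Cpow. C_field. split; auto.
Qed.

(** * Two expansions of the derivatives of [(w^2 - 1)^n] *)

(* The [r]-th derivative of [sum_(i < N) c i (w + s)^(e i)]. *)
Definition power_sum_deriv (c : nat -> R) (e : nat -> nat) (s : C) (N r : nat) (w : C) : C :=
  Csum (fun i => Cmult (RtoC (c i * INR (ffact (e i) r))) (Cpow (Cplus w s) (e i - r))) N.

Lemma is_Cderive_power_sum_deriv c e s N r w :
  is_Cderive (power_sum_deriv c e s N r) w (power_sum_deriv c e s N (S r) w).
Proof.
  apply (is_Cderive_Csum (fun i y => Cmult (RtoC (c i * INR (ffact (e i) r))) (Cpow (Cplus y s) (e i - r)))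
           (fun i y => Cmult (RtoC (c i * INR (ffact (e i) (S r)))) (Cpow (Cplus y s) (e i - S r)))).
  intros i _. eapply is_Cderive_eq; [apply is_Cderive_scal, is_Cderive_pow_shift|].
  simpl ffact. rewrite mult_INR, !RtoC_mult. replace (pred (e i - r)) with (e i - S r)%nat by lia.
  C_ring.
Qed.

Lemma CDerive_n_power_sum f c e s N : (forall w, f w = power_sum_deriv c e s N 0 w) ->
  forall r w, CDerive_n r f w = power_sum_deriv c e s N r w.
Proof.
  intros Hf r w. apply (CDerive_n_on_open (fun _ => True)); auto.
  - intros. apply filter_true.
  - intros. apply is_Cderive_power_sum_deriv.
Qed.

Lemma power_sum_deriv_unique c e s N c' e' s' N' :
  (forall w, power_sum_deriv c e s N 0 w = power_sum_deriv c' e' s' N' 0 w) ->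
  forall r w, power_sum_deriv c e s N r w = power_sum_deriv c' e' s' N' r w.
Proof.
  intros H r w.
  rewrite <- (CDerive_n_power_sum (power_sum_deriv c e s N 0) c e s N),
    <- (CDerive_n_power_sum (power_sum_deriv c e s N 0) c' e' s' N'); auto.
Qed.

(* Both are the [r]-th derivative of [(w^2 - 1)^n]: the first expanded in
   powers of [w], the second in powers of [u = w + eps] via [w^2 - 1 = u (u - 2 eps)]. *)
Definition rodrigues_w (n r : nat) (w : C) : C :=
  power_sum_deriv (fun i => binC n i * (-1) ^ i) (fun i => 2 * n - 2 * i)%nat (RtoC 0) (S n) r w.

Definition rodrigues_u (n : nat) (eps : R) (r : nat) (w : C) : C :=
  power_sum_deriv (fun j => binC n j * (-2 * eps) ^ (n - j)) (fun j => n + j)%nat (RtoC eps) (S n) r w.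

Lemma rodrigues_w_0 n w : rodrigues_w n 0 w = Cpow (Cminus (Cmult w w) (RtoC 1)) n.
Proof.
  replace (Cminus (Cmult w w) (RtoC 1)) with (Cplus (RtoC (-1)) (Cmult w w))
    by (replace (RtoC (-1)) with (Copp (RtoC 1)) by (unfold RtoC, Copp; simpl; f_equal; ring); C_ring).
  rewrite Cbinomial. apply Csum_ext. intros k _. simpl ffact.
  rewrite Cpow_mult_l, <- Cpow_add_r, Nat.sub_0_r, INR_1, !RtoC_mult, !RtoC_pow.
  replace (Cplus w (RtoC 0)) with w by C_ring.
  replace (2 * n - 2 * k)%nat with (n - k + (n - k))%nat by lia. C_ring.
Qed.

Lemma rodrigues_u_0 n eps w : eps * eps = 1 ->
  rodrigues_u n eps 0 w = Cpow (Cminus (Cmult w w) (RtoC 1)) n.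
Proof.
  intros He.
  replace (Cminus (Cmult w w) (RtoC 1))
    with (Cmult (Cplus w (RtoC eps)) (Cplus (Cplus w (RtoC eps)) (RtoC (-2 * eps)))).
  2:{ replace (RtoC (-2 * eps)) with (Copp (Cmult (RtoC 2) (RtoC eps)))
        by (unfold RtoC, Copp, Cmult; simpl; f_equal; ring).
      rewrite <- He, RtoC_mult. C_ring. }
  rewrite Cpow_mult_l, (Cbinomial (Cplus w (RtoC eps))), Csum_mult_l.
  apply Csum_ext. intros k _. simpl ffact.
  rewrite Nat.sub_0_r, Cpow_add_r, INR_1, !RtoC_mult, !RtoC_pow, !RtoC_mult. C_ring.
Qed.

Lemma rodrigues_w_u n eps r w : eps * eps = 1 -> rodrigues_w n r w = rodrigues_u n eps r w.
Proof.
  intros He. apply power_sum_deriv_unique. intros w'.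
  fold (rodrigues_w n 0 w') (rodrigues_u n eps 0 w').
  rewrite rodrigues_w_0, rodrigues_u_0; auto.
Qed.

(** * Legendre and Gegenbauer polynomials around [-eps] *)

Definition legendre_shift_coef (n : nat) (eps : R) (k : nat) : R :=
  (- eps) ^ (n + k) * INR (fact (n + k)) / (INR (fact k) * INR (fact k) * INR (fact (n - k)) * 2 ^ k).

Lemma pow2_fact_neq_0 n : RtoC (2 ^ n * INR (fact n)) <> RtoC 0.
Proof.
  intros E. apply RtoC_inj, Rmult_integral in E.
  destruct E as [E|E]; [exact (pow_nonzero 2 n ltac:(lra) E)|exact (INR_fact_neq_0 n E)].
Qed.

Lemma Cmult_reg_r (a b c : C) : c <> RtoC 0 -> Cmult a c = Cmult b c -> a = b.
Proof.
  intros Hc H. transitivity (Cmult (Cmult a c) (Cinv c)); [C_field; exact Hc|].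
  rewrite H. C_field. exact Hc.
Qed.

Lemma div2_bounds n : (2 * Nat.div2 n <= n < 2 * Nat.div2 n + 2)%nat.
Proof. pose proof (Nat.div2_odd n). destruct (Nat.odd n); simpl in H; lia. Qed.

Lemma Legendre_rodrigues n w : Cmult (Legendre n w) (RtoC (2 ^ n * INR (fact n))) = rodrigues_w n n w.
Proof.
  unfold Legendre, rodrigues_w, power_sum_deriv. pose proof (div2_bounds n).
  rewrite (Csum_vanishing_tail _ (S (Nat.div2 n)) (S n)).
  2: lia.
  2:{ intros k Hk. rewrite ffact_gt by lia. rewrite Rmult_0_r. C_ring. }
  rewrite Cmult_comm, Cmult_assoc, Csum_mult_l. apply Csum_ext. intros k Hk.
  replace (2 * n - 2 * k - n)%nat with (n - 2 * k)%nat by lia.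
  replace (Cplus w (RtoC 0)) with w by C_ring.
  assert (Hr : 2 ^ n * INR (fact n) * / 2 ^ n * ((-1) ^ k * Binomial.C n k * Binomial.C (2 * n - 2 * k) n)
               = binC n k * (-1) ^ k * INR (ffact (2 * n - 2 * k) n)).
  { rewrite binC_eq, ffact_INR by lia. unfold Binomial.C.
    pose proof (INR_fact_neq_0 n). pose proof (INR_fact_neq_0 k). pose proof (INR_fact_neq_0 (n - k)).
    pose proof (INR_fact_neq_0 (2 * n - 2 * k - n)). pose proof (pow_nonzero 2 n ltac:(lra)).
    field. repeat split; auto. }
  rewrite <- Hr, !RtoC_mult. C_ring.
Qed.

Lemma poch_half m r : poch (INR m + / 2) r =
  INR (fact (2 * (m + r))) * INR (fact m) / (4 ^ r * INR (fact (m + r)) * INR (fact (2 * m))).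
Proof.
  induction r as [|r IH].
  - cbn [poch pow]. rewrite Nat.add_0_r. field. split; apply INR_fact_neq_0.
  - cbn [poch]. rewrite IH.
    replace (2 * (m + S r))%nat with (S (S (2 * (m + r)))) by lia.
    replace (m + S r)%nat with (S (m + r)) by lia.
    rewrite !fact_simpl, !mult_INR, !S_INR, mult_INR, plus_INR. cbn [pow]. replace (INR 2) with 2 by (simpl; lra).
    pose proof (INR_fact_neq_0 (2 * (m + r))). pose proof (INR_fact_neq_0 (m + r)).
    pose proof (INR_fact_neq_0 (2 * m)). pose proof (pos_INR m). pose proof (pos_INR r).
    pose proof (pow_nonzero 4 r ltac:(lra)). field. repeat split; lra.
Qed.

Lemma Gegenbauer_rodrigues n m w : (m <= n)%nat ->
  Cmult (Cmult (RtoC (INR (fact (2 * m)) / (2 ^ m * INR (fact m)))) (Gegenbauer (n - m) (INR m + / 2) w))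
        (RtoC (2 ^ n * INR (fact n))) = rodrigues_w n (n + m) w.
Proof.
  intros Hmn. unfold Gegenbauer, rodrigues_w, power_sum_deriv. pose proof (div2_bounds (n - m)).
  rewrite (Csum_vanishing_tail _ (S (Nat.div2 (n - m))) (S n)).
  2: lia.
  2:{ intros k Hk. rewrite ffact_gt by lia. rewrite Rmult_0_r. C_ring. }
  rewrite Cmult_comm, Cmult_assoc, Csum_mult_l. apply Csum_ext. intros k Hk.
  destruct (Nat.le_exists_sub (2 * k) (n - m) ltac:(lia)) as [s [Hs _]].
  replace n with (m + 2 * k + s)%nat in * by lia. clear Hs.
  replace (2 * (m + 2 * k + s) - 2 * k - (m + 2 * k + s + m))%nat with s by lia.
  replace (m + 2 * k + s - m - 2 * k)%nat with s by lia.
  replace (m + 2 * k + s - m - k)%nat with (k + s)%nat by lia.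
  replace (Cplus w (RtoC 0)) with w by C_ring.
  rewrite Cpow_mult_l, <- RtoC_pow.
  assert (Hr : 2 ^ (m + 2 * k + s) * INR (fact (m + 2 * k + s)) * (INR (fact (2 * m)) / (2 ^ m * INR (fact m))) *
               ((-1) ^ k * poch (INR m + / 2) (k + s) / (INR (fact k) * INR (fact s))) * 2 ^ s
             = binC (m + 2 * k + s) k * (-1) ^ k * INR (ffact (2 * (m + 2 * k + s) - 2 * k) (m + 2 * k + s + m))).
  { rewrite binC_eq, ffact_INR, poch_half by lia.
    replace (2 * (m + 2 * k + s) - 2 * k - (m + 2 * k + s + m))%nat with s by lia.
    replace (m + 2 * k + s - k)%nat with (m + k + s)%nat by lia.
    replace (2 * (m + (k + s)))%nat with (2 * (m + 2 * k + s) - 2 * k)%nat by lia.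
    replace (m + (k + s))%nat with (m + k + s)%nat by lia.
    replace (4 ^ (k + s)) with (2 ^ k * 2 ^ k * 2 ^ s * 2 ^ s)
      by (replace 4 with (2 * 2) by ring; rewrite Rpow_mult_distr, !pow_add; ring).
    replace (2 ^ (m + 2 * k + s)) with (2 ^ m * 2 ^ k * 2 ^ k * 2 ^ s)
      by (rewrite <- !pow_add; f_equal; lia).
    pose proof (INR_fact_neq_0 (m + 2 * k + s)). pose proof (INR_fact_neq_0 k).
    pose proof (INR_fact_neq_0 s). pose proof (INR_fact_neq_0 (m + k + s)).
    pose proof (INR_fact_neq_0 (2 * m)). pose proof (INR_fact_neq_0 m).
    pose proof (INR_fact_neq_0 (2 * (m + 2 * k + s) - 2 * k)).
    pose proof (pow_nonzero 2 m ltac:(lra)). pose proof (pow_nonzero 2 k ltac:(lra)).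
    pose proof (pow_nonzero 2 s ltac:(lra)).
    field. repeat split; auto. }
  rewrite <- Hr, !RtoC_mult. C_ring.
Qed.

Lemma rodrigues_u_top n eps m w : eps * eps = 1 -> (m <= n)%nat ->
  rodrigues_u n eps (n + m) w =
  Cmult (Csum (fun j => Cmult (RtoC (legendre_shift_coef n eps (m + j) * INR (ffact (m + j) m)))
                              (Cpow (Cplus w (RtoC eps)) j)) (S (n - m)))
        (RtoC (2 ^ n * INR (fact n))).
Proof.
  intros He Hmn. unfold rodrigues_u, power_sum_deriv.
  (* the powers [u^(n + j)] with [j < m] are killed by the [n + m] derivatives *)
  replace (S n) with (m + S (n - m))%nat by lia. rewrite Csum_add.
  rewrite (Csum_zero (fun i => Cmult _ (Cpow (Cplus w (RtoC eps)) (n + i - (n + m))))).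
  2:{ intros k Hk. rewrite ffact_gt by lia. rewrite Rmult_0_r. C_ring. }
  rewrite Cplus_0_l, Csum_mult_r. apply Csum_ext. intros j Hj.
  destruct (Nat.le_exists_sub j (n - m) ltac:(lia)) as [s [Hs _]].
  replace n with (m + j + s)%nat in * by lia. clear Hs.
  replace (m + j + s + (m + j) - (m + j + s + m))%nat with j by lia.
  assert (Hr : binC (m + j + s) (m + j) * (-2 * eps) ^ (m + j + s - (m + j))
                 * INR (ffact (m + j + s + (m + j)) (m + j + s + m))
             = legendre_shift_coef (m + j + s) eps (m + j) * INR (ffact (m + j) m)
                 * (2 ^ (m + j + s) * INR (fact (m + j + s)))).
  { unfold legendre_shift_coef. rewrite binC_eq, !ffact_INR by lia.
    replace (m + j + s - (m + j))%nat with s by lia. replace (m + j - m)%nat with j by lia.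
    replace (m + j + s + (m + j) - (m + j + s + m))%nat with j by lia.
    replace (m + j + s + (m + j))%nat with (2 * (m + j) + s)%nat by lia.
    rewrite pow_add, pow_mult. replace ((- eps) ^ 2) with 1 by (simpl; nra). rewrite pow1.
    replace ((-2 * eps) ^ s) with ((- eps) ^ s * 2 ^ s) by (rewrite <- Rpow_mult_distr; f_equal; ring).
    replace (2 ^ (m + j + s)) with (2 ^ (m + j) * 2 ^ s) by (rewrite <- pow_add; reflexivity).
    pose proof (INR_fact_neq_0 (m + j)). pose proof (INR_fact_neq_0 j). pose proof (INR_fact_neq_0 s).
    pose proof (INR_fact_neq_0 (m + j + s)). pose proof (INR_fact_neq_0 (2 * (m + j) + s)).
    pose proof (pow_nonzero 2 (m + j) ltac:(lra)).
    field. repeat split; auto. }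
  rewrite Hr, !RtoC_mult. C_ring.
Qed.

Lemma Legendre_shift_expansion n eps w : eps * eps = 1 ->
  Legendre n w = Csum (fun k => Cmult (RtoC (legendre_shift_coef n eps k)) (Cpow (Cplus w (RtoC eps)) k)) (S n).
Proof.
  intros He. apply (Cmult_reg_r _ _ _ (pow2_fact_neq_0 n)).
  rewrite Legendre_rodrigues.
  replace (rodrigues_w n n w) with (rodrigues_w n (n + 0) w) by (rewrite Nat.add_0_r; reflexivity).
  rewrite (rodrigues_w_u n eps), rodrigues_u_top, Nat.sub_0_r by (auto || lia).
  f_equal. apply Csum_ext. intros k _. simpl ffact. rewrite INR_1, Rmult_1_r. reflexivity.
Qed.

Lemma Gegenbauer_shift_expansion n eps m w : eps * eps = 1 -> (m <= n)%nat ->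
  Cmult (RtoC (INR (fact (2 * m)) / (2 ^ m * INR (fact m)))) (Gegenbauer (n - m) (INR m + / 2) w) =
  Csum (fun j => Cmult (RtoC (legendre_shift_coef n eps (m + j) * INR (ffact (m + j) m)))
                       (Cpow (Cplus w (RtoC eps)) j)) (S (n - m)).
Proof.
  intros He Hmn. apply (Cmult_reg_r _ _ _ (pow2_fact_neq_0 n)).
  rewrite Gegenbauer_rodrigues, (rodrigues_w_u n eps), rodrigues_u_top by auto. reflexivity.
Qed.

(** * The digamma function at the positive integers *)

Lemma ln_le_sub_1 y : 0 < y -> ln y <= y - 1.
Proof. intros H. pose proof (exp_ineq1_le (ln y)). rewrite exp_ln in H0 by exact H. lra. Qed.

Lemma ln_S_sub_bounds n : / INR (n + 2) <= ln (INR (n + 2)) - ln (INR (n + 1)) <= / INR (n + 1).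
Proof.
  assert (H1 : 0 < INR (n + 1)) by (apply lt_0_INR; lia).
  assert (H2 : INR (n + 2) = INR (n + 1) + 1) by (rewrite !plus_INR; simpl; ring).
  pose proof (ln_le_sub_1 (INR (n + 1) / INR (n + 2)) ltac:(apply Rdiv_lt_0_compat; lra)) as K1.
  pose proof (ln_le_sub_1 (INR (n + 2) / INR (n + 1)) ltac:(apply Rdiv_lt_0_compat; lra)) as K2.
  rewrite ln_div in K1, K2 by lra.
  replace (INR (n + 1) / INR (n + 2) - 1) with (- / INR (n + 2)) in K1 by (rewrite H2; field; lra).
  replace (INR (n + 2) / INR (n + 1) - 1) with (/ INR (n + 1)) in K2 by (rewrite H2; field; lra).
  lra.
Qed.

Lemma ln_le_harmonic N : ln (INR (N + 1)) <= harmonic N.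
Proof.
  induction N as [|N IH]; [simpl; rewrite ln_1; lra|].
  pose proof (ln_S_sub_bounds N). cbn [harmonic].
  replace (S N + 1)%nat with (N + 2)%nat by lia. replace (S N) with (N + 1)%nat by lia. lra.
Qed.

Lemma sum_inv_shift p M : sum_f_R0 (fun j => / (INR (p + 1) + INR j)) M = harmonic (M + p + 1) - harmonic p.
Proof.
  induction M as [|M IH]; cbn [sum_f_R0].
  - rewrite Nat.add_0_l, Nat.add_1_r, INR_0, Rplus_0_r. cbn [harmonic]. ring.
  - rewrite IH, <- plus_INR. replace (p + 1 + S M)%nat with (S (M + p + 1)) by lia.
    replace (S M + p + 1)%nat with (S (M + p + 1)) by lia. cbn [harmonic]. ring.
Qed.

Lemma ex_lim_ln_sub_harmonic : exists L : R, is_lim_seq (fun N => ln (INR N) - harmonic (N + 1)) L.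
Proof.
  destruct (ex_finite_lim_seq_incr (fun N => ln (INR (S N)) - harmonic (S N + 1)) 0) as [L HL].
  - intros N. pose proof (ln_S_sub_bounds N).
    replace (S (S N)) with (N + 2)%nat by lia. replace (S N) with (N + 1)%nat by lia.
    replace (N + 2 + 1)%nat with (S (N + 2)) by lia. replace (N + 1 + 1)%nat with (N + 2)%nat by lia.
    cbn [harmonic]. replace (S (N + 2)) with (N + 3)%nat by lia.
    enough (/ INR (N + 3) <= / INR (N + 2)) by lra.
    apply Rinv_le_contravar; [apply lt_0_INR; lia|apply le_INR; lia].
  - intros N. pose proof (ln_le_harmonic N). replace (S N + 1)%nat with (S (S N)) by lia.
    cbn [harmonic]. replace (N + 1)%nat with (S N) in * by lia.
    assert (0 <= / INR (S N)) by (left; apply Rinv_0_lt_compat, lt_0_INR; lia).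
    assert (0 <= / INR (S (S N))) by (left; apply Rinv_0_lt_compat, lt_0_INR; lia). lra.
  - exists L. apply is_lim_seq_incr_1, HL.
Qed.

Lemma harmonic_tail_lim p : is_lim_seq (fun N => harmonic (N + p + 1) - harmonic (N + 1)) 0.
Proof.
  induction p as [|p IH].
  - apply (is_lim_seq_ext (fun _ => 0)); [intros N; rewrite Nat.add_0_r; ring|apply is_lim_seq_const].
  - assert (Hinv : is_lim_seq (fun N => / INR (N + p + 2)) 0).
    { assert (K : is_lim_seq (fun N => / INR N) 0).
      { replace (Finite 0) with (Rbar_inv p_infty) by reflexivity.
        apply is_lim_seq_inv; [apply is_lim_seq_INR|discriminate]. }
      apply (is_lim_seq_incr_n _ (p + 2)) in K.
      eapply is_lim_seq_ext; [|exact K]. intros N. cbv beta. rewrite Nat.add_assoc. reflexivity. }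
    eapply is_lim_seq_ext; [|replace 0 with (0 + 0) by ring; apply is_lim_seq_plus'; [exact IH|exact Hinv]].
    intros N. replace (N + S p + 1)%nat with (S (N + p + 1)) by lia. cbn [harmonic].
    replace (S (N + p + 1)) with (N + p + 2)%nat by lia. ring.
Qed.

Lemma digamma_nat : exists L, forall q, digamma (INR (q + 1)) = L + harmonic q.
Proof.
  destruct ex_lim_ln_sub_harmonic as [L HL]. exists L. intros q.
  unfold digamma. replace (L + harmonic q) with (real (Finite (L + harmonic q))) by reflexivity.
  f_equal. apply is_lim_seq_unique.
  eapply is_lim_seq_ext; [|replace (L + harmonic q) with (L - 0 + harmonic q) by ring;
    apply is_lim_seq_plus'; [apply is_lim_seq_minus'; [exact HL|apply (harmonic_tail_lim q)]
                            |apply is_lim_seq_const]].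
  intros N. cbv beta. rewrite sum_inv_shift. ring.
Qed.

Lemma digamma_sub_nat k m : digamma (INR (k + m + 1)) - digamma (INR (k + 1)) = harmonic (k + m) - harmonic k.
Proof. destruct digamma_nat as [L HL]. rewrite (HL (k + m)%nat), (HL k). ring. Qed.

Lemma CDerive_n_Legendre_log n eps m z : eps * eps = 1 ->
  0 < Cmod (Cplus z (RtoC eps)) + Re (Cplus z (RtoC eps)) ->
  CDerive_n m (fun w => Cmult (Legendre n w) (Cln (Cplus w (RtoC eps)))) z =
  Csum (fun k => Cmult (RtoC (legendre_shift_coef n eps k)) (log_monomial_deriv (RtoC eps) k m z)) (S n).
Proof.
  intros He Hz.
  apply (CDerive_n_on_open (fun w => 0 < Cmod (Cplus w (RtoC eps)) + Re (Cplus w (RtoC eps)))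
           _ (fun m w => Csum (fun k => Cmult (RtoC (legendre_shift_coef n eps k))
                                               (log_monomial_deriv (RtoC eps) k m w)) (S n))); auto.
  - apply Cnear_off_cut_shift.
  - intros w _. rewrite (Legendre_shift_expansion n eps w He), Csum_mult_r.
    apply Csum_ext. intros k _. rewrite log_monomial_deriv_0. C_ring.
  - intros k w Hw.
    apply (is_Cderive_Csum (fun i y => Cmult (RtoC (legendre_shift_coef n eps i)) (log_monomial_deriv (RtoC eps) i k y))
             (fun i y => Cmult (RtoC (legendre_shift_coef n eps i)) (log_monomial_deriv (RtoC eps) i (S k) y))).
    intros i _. apply is_Cderive_scal, is_Cderive_log_monomial_deriv, Hw.
Qed.

Lemma Legendre_log_low_terms n eps m z : (m <= n)%nat -> Cplus z (RtoC eps) <> RtoC 0 ->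
  Csum (fun k => Cmult (RtoC (legendre_shift_coef n eps k)) (log_monomial_deriv (RtoC eps) k m z)) m =
  Copp (Cmult (RtoC ((- eps) ^ n * (-1) ^ m))
          (Cmult (Cinv (Cpow (Cplus z (RtoC eps)) m))
             (Csum (fun k => Cmult (RtoC (eps ^ k * (INR (fact (k + n)) * INR (fact (m - k - 1)))
                                            / (INR (fact k) * INR (fact (n - k)))))
                                   (Cpow (Cmult (Cplus z (RtoC eps)) (RtoC (/ 2))) k)) m))).
Proof.
  intros Hmn Hu. rewrite !Csum_mult_l, Csum_opp. apply Csum_ext. intros k Hk.
  unfold log_monomial_deriv. destruct (Nat.leb_spec m k) as [Hmk|_]; [lia|].
  destruct (Nat.le_exists_sub (S k) m Hk) as [t [-> _]].
  replace (t + S k - k - 1)%nat with t by lia. replace (t + S k - k)%nat with (S t) by lia.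
  set (u := Cplus z (RtoC eps)) in *.
  replace (t + S k)%nat with (S t + k)%nat by lia.
  rewrite Cpow_add_r, Cpow_mult_l, <- (RtoC_pow (/ 2)).
  pose proof (Cpow_nz u k Hu). pose proof (Cpow_nz u (S t) Hu).
  assert (Hc : legendre_shift_coef n eps k * ((-1) ^ t * INR (fact k) * INR (fact t)) =
     - ((- eps) ^ n * (-1) ^ (S t + k)) * (eps ^ k * (INR (fact (k + n)) * INR (fact t)) /
        (INR (fact k) * INR (fact (n - k)))) * (/ 2) ^ k).
  { unfold legendre_shift_coef. rewrite (Nat.add_comm k n).
    replace (- eps) with (-1 * eps) by ring. rewrite !Rpow_mult_distr, !pow_add, pow_inv.
    pose proof (INR_fact_neq_0 k). pose proof (INR_fact_neq_0 (n - k)).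
    pose proof (pow_nonzero 2 k ltac:(lra)). simpl pow. field. repeat split; auto. }
  transitivity (Cmult (RtoC (legendre_shift_coef n eps k * ((-1) ^ t * INR (fact k) * INR (fact t))))
                      (Cinv (Cpow u (S t)))).
  { rewrite (RtoC_mult (legendre_shift_coef n eps k)). C_ring. }
  rewrite Hc, !RtoC_mult, RtoC_opp, !RtoC_mult. C_field. auto.
Qed.

Lemma Legendre_log_high_terms n eps m z : eps * eps = 1 -> (m <= n)%nat ->
  Csum (fun j => Cmult (RtoC (legendre_shift_coef n eps (m + j))) (log_monomial_deriv (RtoC eps) (m + j) m z))
       (S (n - m)) =
  Cplus (Cmult (RtoC (INR (fact (2 * m)) / (2 ^ m * INR (fact m))))
           (Cmult (Gegenbauer (n - m) (INR m + / 2) z) (Cln (Cplus z (RtoC eps)))))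
        (Cmult (RtoC ((- eps) ^ (n + m) / 2 ^ m))
           (Csum (fun k => Cmult (RtoC ((- eps) ^ k * INR (fact (k + n + m))
                                          / (INR (fact k) * INR (fact (k + m)) * INR (fact (n - m - k)))
                                          * (digamma (INR (k + m + 1)) - digamma (INR (k + 1)))))
                                 (Cpow (Cmult (Cplus z (RtoC eps)) (RtoC (/ 2))) k)) (S (n - m)))).
Proof.
  intros He Hmn.
  rewrite Cmult_assoc, (Gegenbauer_shift_expansion n eps m z He Hmn).
  rewrite Csum_mult_r, Csum_mult_l, <- Csum_plus. apply Csum_ext. intros j Hj.
  unfold log_monomial_deriv. destruct (Nat.leb_spec m (m + j)) as [_|]; [|lia].
  replace (m + j - m)%nat with j by lia.
  rewrite (digamma_sub_nat j m), (Nat.add_comm j m).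
  destruct (Nat.le_exists_sub j (n - m) ltac:(lia)) as [s [Hs _]].
  replace n with (m + j + s)%nat in * by lia. clear Hs.
  assert (Hc : legendre_shift_coef (m + j + s) eps (m + j) * INR (ffact (m + j) m) =
     (- eps) ^ (m + j + s + m) / 2 ^ m * ((- eps) ^ j * INR (fact (j + (m + j + s) + m))
       / (INR (fact j) * INR (fact (m + j)) * INR (fact (m + j + s - m - j)))) * (/ 2) ^ j).
  { unfold legendre_shift_coef. rewrite ffact_INR by lia.
    replace (m + j - m)%nat with j by lia. replace (m + j + s - m - j)%nat with s by lia.
    replace (m + j + s - (m + j))%nat with s by lia.
    replace (j + (m + j + s) + m)%nat with (m + j + s + (m + j))%nat by lia.
    replace (m + j + s + (m + j))%nat with (m + j + s + m + j)%nat by lia.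
    rewrite pow_inv, (pow_add (- eps) (m + j + s + m) j), (pow_add 2 m j).
    pose proof (INR_fact_neq_0 (m + j)). pose proof (INR_fact_neq_0 j). pose proof (INR_fact_neq_0 s).
    pose proof (pow_nonzero 2 m ltac:(lra)). pose proof (pow_nonzero 2 j ltac:(lra)).
    field. repeat split; auto. }
  rewrite Cpow_mult_l, <- RtoC_pow, Cmult_assoc, <- RtoC_mult, Hc, !RtoC_mult. C_ring.
Qed.

Theorem mainTheorem4 (m n : nat) (eps : R) (z : C) :
  (m <= n)%nat ->
  (eps = 1 \/ eps = -1) ->
  ~ (Im z = 0 /\ Re z <= 1) ->
  CDerive_n m (fun w => Cmult (Legendre n w) (Cln (Cplus w (RtoC eps)))) z =
  Cplus
   (Cminus
    (Cmult (RtoC (INR (fact (2*m)) / (2 ^ m * INR (fact m))))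
       (Cmult (Gegenbauer (n - m) (INR m + / 2) z) (Cln (Cplus z (RtoC eps)))))
    (Cmult (RtoC ((- eps) ^ n * (-1) ^ m))
       (Cmult (Cinv (Cpow (Cplus z (RtoC eps)) m))
          (Csum (fun k =>
                   Cmult (RtoC (eps ^ k * (INR (fact (k + n)) * INR (fact (m - k - 1)))
                                / (INR (fact k) * INR (fact (n - k)))))
                         (Cpow (Cmult (Cplus z (RtoC eps)) (RtoC (/ 2))) k))
                m))))
   (Cmult (RtoC ((- eps) ^ (n + m) / 2 ^ m))
      (Csum (fun k =>
               Cmult (RtoC ((- eps) ^ k * INR (fact (k + n + m))
                            / (INR (fact k) * INR (fact (k + m)) * INR (fact (n - m - k)))
                            * (digamma (INR (k + m + 1)) - digamma (INR (k + 1)))))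
                     (Cpow (Cmult (Cplus z (RtoC eps)) (RtoC (/ 2))) k))
            (S (n - m)))).
Proof.
  intros Hmn Heps Hz.
  assert (He : eps * eps = 1) by (destruct Heps; subst; ring).
  assert (Hu : 0 < Cmod (Cplus z (RtoC eps)) + Re (Cplus z (RtoC eps))).
  { apply off_cut_of_not_nonpos. rewrite im_plus, re_plus, im_RtoC, re_RtoC, Rplus_0_r.
    intros [Him Hre]. apply Hz. split; [exact Him|destruct Heps; subst; lra]. }
  rewrite CDerive_n_Legendre_log by auto.
  replace (S n) with (m + S (n - m))%nat by lia.
  rewrite Csum_add, Legendre_log_low_terms, Legendre_log_high_terms
    by auto using nonzero_off_cut.
  unfold Cminus. C_ring.
Qed.
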